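(* Let $\mathbf{u}=(u_1,u_2)$ be a pair of real binary forms of degree $d$, and let $g,h,u_1',u_2'$ be real binary forms with $(u_1,u_2)=(u_1'gh,u_2'gh)$, $\gcd(u_1,u_2)=gh$, $\gcd(u_1',u_2')=1$, $\gcd(u_1'^2+u_2'^2,g)=1$, and such that every (possibly complex) root of $h$ is a root of $u_1'^2+u_2'^2$. Then both $u_1'^2+u_2'^2$ and $h$ have no real roots, and $\deg(h)$ is even.
   Context: A real binary form is a homogeneous polynomial in two variables $x_1,x_2$ with real coefficients. A root of a binary form $q$ is a nonzero point $(a,b)\in\mathbb{C}^2$ (up to scaling) with $q(a,b)=0$; a real root is one with $(a,b)\in\mathbb{R}^2\setminus\{0\}$. $\gcd$ of binary forms is the common divisor of highest degree (unique up to scalar); $\gcd=1$ means coprime. *)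

From HB Require Import structures.
From mathcomp Require Import all_boot all_order all_algebra.
From mathcomp Require Import mpoly.
From mathcomp Require Import complex.
Set Implicit Arguments. Unset Strict Implicit. Unset Printing Implicit Defensive.
Import Order.TTheory GRing.Theory Num.Theory.
Local Open Scope ring_scope.

(* Real binary forms: homogeneous polynomials in two variables x_1, x_2
   (indexed by 'I_2) with coefficients in a real closed field R
   (the paper: R = the reals). *)
Definition binary_form (R : rcfType) (q : {mpoly R[2]}) : Prop :=
  exists k : nat, q \is k.-homog.

(* Degree of a (nonzero) form = total degree. *)
Definition form_deg (R : rcfType) (q : {mpoly R[2]}) : nat := (msize q).-1.

Definition mdvd (R : rcfType) (p q : {mpoly R[2]}) : Prop :=
  exists c : {mpoly R[2]}, q = c * p.

(* r is a gcd of p and q (gcd is unique up to a nonzero scalar). *)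
Definition is_gcd (R : rcfType) (p q r : {mpoly R[2]}) : Prop :=
  mdvd r p /\ mdvd r q /\
  forall s : {mpoly R[2]}, mdvd s p -> mdvd s q -> mdvd s r.

Definition cplx (R : rcfType) (q : {mpoly R[2]}) : {mpoly R[i][2]} :=
  map_mpoly (fun x : R => (x%:C)%C) q.

Definition is_root_C (R : rcfType) (q : {mpoly R[2]}) (z : 'I_2 -> R[i]) : Prop :=
  (exists j, z j != 0) /\ (cplx q).@[z] = 0.

Definition is_root_R (R : rcfType) (q : {mpoly R[2]}) (x : 'I_2 -> R) : Prop :=
  (exists j, x j != 0) /\ q.@[x] = 0.

From HB Require Import structures.
From mathcomp Require Import all_boot all_order all_algebra.
From mathcomp Require Import mpoly.
From mathcomp Require Import complex polyrcf.
From mathcomp Require Import ring.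
Import Order.TTheory GRing.Theory Num.Theory.
Local Open Scope ring_scope.

(* A real zero x <> 0 of a binary form q of degree k is detected by the linear
   form L_x = x_2 X_1 - x_1 X_2: if x_j <> 0, then X_i x_j = x_i X_j modulo L_x,
   so x_j^k q(X) = q(x_j X) = q(x X_j) = X_j^k q(x) = 0 modulo L_x.
   Hence coprime forms u, v have no common real zero, i.e. u^2 + v^2 has no
   real zero.  A real zero of h would be a complex zero of h, hence a zero of
   u^2 + v^2.  Finally, a form h of odd degree takes opposite values at the
   antipodal points (1, 0) and (-1, 0), so by the intermediate value theorem it
   vanishes somewhere on the path t |-> (1 - 2t, t - t^2), which avoids the
   origin. *)

Section MPolyMap.
Context {n : nat}.
Implicit Types (R S T : nzRingType).

Lemma eq_mmap {R S} (f1 f2 : R -> S) (v1 v2 : 'I_n -> S) (p : {mpoly R[n]}) :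
  f1 =1 f2 -> v1 =1 v2 -> mmap f1 v1 p = mmap f2 v2 p.
Proof.
move=> ef ev; rewrite /mmap; apply: eq_bigr => m _.
by rewrite ef (mmap1_eq _ ev).
Qed.

Lemma rmorph_mmap {R S T} (phi : {rmorphism S -> T}) (f : R -> S) (v : 'I_n -> S)
    (p : {mpoly R[n]}) :
  phi (mmap f v p) = mmap (phi \o f) (phi \o v) p.
Proof.
rewrite /mmap rmorph_sum; apply: eq_bigr => m _.
rewrite rmorphM rmorph_prod; congr (_ * _); apply: eq_bigr => i _.
exact: rmorphXn.
Qed.

Lemma mmap_homog {R} {S : comNzRingType} (f : R -> S) (c : 'I_n -> S) {t : S} {k}
    {p : {mpoly R[n]}} :
  p \is k.-homog -> mmap f (fun i => c i * t) p = t ^+ k * mmap f c p.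
Proof.
move=> /dhomog_mf hk; rewrite /mmap mulr_sumr big_seq [RHS]big_seq.
apply: eq_bigr => m /hk mk; rewrite /mmap1.
under eq_bigr do rewrite exprMn.
by rewrite big_split /= prodrXr -mdegE mk mulrA [LHS]mulrC.
Qed.

Definition eqmodr {S : comNzRingType} (D a b : S) : Prop := exists c, a - b = c * D.

Lemma eqmodr_refl {S : comNzRingType} (D a : S) : eqmodr D a a.
Proof. by exists 0; rewrite subrr mul0r. Qed.

Lemma eqmodrD {S : comNzRingType} (D a1 b1 a2 b2 : S) :
  eqmodr D a1 b1 -> eqmodr D a2 b2 -> eqmodr D (a1 + a2) (b1 + b2).
Proof.
move=> [c1 e1] [c2 e2]; exists (c1 + c2).
by rewrite mulrDl -e1 -e2 opprD addrACA.
Qed.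

Lemma eqmodrM {S : comNzRingType} (D a1 b1 a2 b2 : S) :
  eqmodr D a1 b1 -> eqmodr D a2 b2 -> eqmodr D (a1 * a2) (b1 * b2).
Proof.
move=> [c1 e1] [c2 e2]; exists (a1 * c2 + c1 * b2).
rewrite mulrDl -mulrA -e2 mulrAC -e1; ring.
Qed.

Lemma eqmodrX {S : comNzRingType} (D a b : S) k :
  eqmodr D a b -> eqmodr D (a ^+ k) (b ^+ k).
Proof.
move=> eab; elim: k => [|k ih]; first by rewrite !expr0; apply: eqmodr_refl.
by rewrite !exprS; apply: eqmodrM.
Qed.

Lemma eqmodr_mmap {R} {S : comNzRingType} {D : S} (f : R -> S) {v1 v2 : 'I_n -> S}
    (p : {mpoly R[n]}) :
  (forall i, eqmodr D (v1 i) (v2 i)) -> eqmodr D (mmap f v1 p) (mmap f v2 p).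
Proof.
move=> ev; apply: (big_ind2 (eqmodr D)); [exact: eqmodr_refl | exact: eqmodrD |].
move=> m _; apply: eqmodrM; first exact: eqmodr_refl.
apply: (big_ind2 (eqmodr D)); [exact: eqmodr_refl | exact: eqmodrM |].
by move=> i _; apply: eqmodrX.
Qed.

Lemma mmap_mpolyC_X {R : comNzRingType} (p : {mpoly R[n]}) :
  mmap (@mpolyC n R) (fun i => 'X_i) p = p.
Proof.
by rewrite /mmap [RHS]mpolyE; apply: eq_bigr => m _; rewrite mmap1_id mul_mpolyC.
Qed.

Lemma mmap_mpolyC_meval {R : comNzRingType} (p : {mpoly R[n]}) (x : 'I_n -> R) :
  mmap (@mpolyC n R) (fun i => (x i)%:MP) p = (p.@[x])%:MP.
Proof. by rewrite /meval (rmorph_mmap (@mpolyC n R)); apply: eq_mmap. Qed.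

Lemma horner_mmap_polyC {R : comNzRingType} (p : {mpoly R[n]})
    (v : 'I_n -> {poly R}) (t : R) :
  (mmap (@polyC R) v p).[t] = p.@[fun i => (v i).[t]].
Proof.
rewrite -horner_evalE (rmorph_mmap (horner_eval t)) /meval.
by apply: eq_mmap => [r|i] /=; rewrite horner_evalE ?hornerC.
Qed.

End MPolyMap.

Lemma ord2P (i : 'I_2) : i = 0 \/ i = 1.
Proof. by case: i => [[|[|//]] ?]; [left | right]; apply: val_inj. Qed.

Section BinaryForms.
Context {R : rcfType}.
Implicit Types (q u v h : {mpoly R[2]}) (x : 'I_2 -> R).

Definition line_form x : {mpoly R[2]} := (x 1)%:MP * 'X_0 - (x 0)%:MP * 'X_1.

Lemma line_form_dvd_root {k q x j} :
  q \is k.-homog -> x j != 0 -> q.@[x] = 0 -> mdvd (line_form x) q.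
Proof.
move=> hq xj qx.
have X_eqmod i : eqmodr (line_form x) ('X_i * (x j)%:MP) ((x i)%:MP * 'X_j).
  rewrite /eqmodr /line_form.
  by case: (ord2P i) => ->; case: (ord2P j) => ->;
    [exists 0 | exists 1 | exists (-1) | exists 0]; ring.
have [c e] := eqmodr_mmap (@mpolyC 2 R) q X_eqmod.
move: e; rewrite (mmap_homog _ (fun i => 'X_i) hq).
rewrite (mmap_homog _ (fun i => (x i)%:MP) hq) mmap_mpolyC_X mmap_mpolyC_meval.
rewrite qx mulr0 subr0 -rmorphXn => e.
exists ((x j ^+ k)^-1%:MP * c).
by rewrite -mulrA -e mulrA -rmorphM mulVf ?expf_neq0 // mul1r.
Qed.

Lemma coprime_forms_no_common_root {u v x} :
  binary_form u -> binary_form v -> is_gcd u v 1 -> (exists j, x j != 0) ->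
  u.@[x] = 0 -> v.@[x] = 0 -> False.
Proof.
move=> [ku hu] [kv hv] [_ [_ gcd1]] [j xj] ux vx.
have [c /(congr1 (meval x))] :=
  gcd1 _ (line_form_dvd_root hu xj ux) (line_form_dvd_root hv xj vx).
rewrite meval1 mevalM /line_form mevalB !mevalM !mevalC !mevalXU.
by rewrite [x 1 * _]mulrC subrr mulr0 => /eqP; rewrite oner_eq0.
Qed.

Lemma coprime_forms_sum_sqr_no_real_root {u v} x :
  binary_form u -> binary_form v -> is_gcd u v 1 -> ~ is_root_R (u ^+ 2 + v ^+ 2) x.
Proof.
move=> bu bv gcd1 [nzx]; rewrite mevalD !rmorphXn /= => /eqP.
rewrite paddr_eq0 ?sqr_ge0 // !sqrf_eq0 => /andP[/eqP ux /eqP vx].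
exact: (coprime_forms_no_common_root bu bv gcd1 nzx ux vx).
Qed.

Lemma meval_cplx q x : (cplx q).@[fun i => (x i)%:C%C] = (q.@[x])%:C%C.
Proof.
rewrite /cplx /map_mpoly (rmorph_mmap (meval (fun i => (x i)%:C%C))).
rewrite /meval (rmorph_mmap (real_complex R)).
by apply: eq_mmap => r /=; rewrite ?mevalC ?mevalXU.
Qed.

Lemma is_root_C_real q x : is_root_C q (fun i => (x i)%:C%C) <-> is_root_R q x.
Proof.
rewrite /is_root_C /is_root_R meval_cplx.
split=> -[[j xj] qx]; split.
- by exists j; rewrite fmorph_eq0 in xj.
- by apply/eqP; move/eqP: qx; rewrite fmorph_eq0.
- by exists j; rewrite fmorph_eq0.
- by rewrite qx rmorph0.
Qed.

Lemma odd_homog_real_root {k h} :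
  h \is k.-homog -> odd k -> exists x, is_root_R h x.
Proof.
move=> hh ok.
pose gamma t : 'I_2 -> R := fun i => if i == 0 then 1 - 2%:R * t else t - t ^+ 2.
pose P := mmap (@polyC R)
  (fun i : 'I_2 => if i == 0 then 1 - 2%:R *: 'X else 'X - 'X ^+ 2) h.
have PE t : P.[t] = h.@[gamma t].
  rewrite horner_mmap_polyC; apply: meval_eq => i.
  by rewrite /gamma; case: (i == 0); rewrite !hornerE.
have P1 : P.[1] = - P.[0].
  rewrite !PE (@meval_eq _ _ _ (fun i => gamma 0 i * -1)); last first.
    by move=> i; rewrite /gamma; case: (i == 0); ring.
  by rewrite /meval (mmap_homog _ _ hh) -signr_odd ok mulN1r.
have [|t _ rt] := @polyrcf.poly_ivt R P 0 1 ler01.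
  by rewrite P1 mulrN -expr2 oppr_le0 sqr_ge0.
exists (gamma t); split; last by move: rt; rewrite /root PE => /eqP.
have conic : gamma t 0 ^+ 2 + 4%:R * gamma t 1 = 1 by rewrite /gamma /=; ring.
have [g0|] := eqVneq (gamma t 0) 0; last by exists 0.
exists 1; apply/eqP => g1; move: conic.
by rewrite g0 g1 expr0n mulr0 addr0 => /eqP; rewrite eq_sym oner_eq0.
Qed.

Lemma binary_form_odd_real_root {h} :
  binary_form h -> odd (form_deg h) -> exists x, is_root_R h x.
Proof.
move=> [k hh]; have [->|nzh] := eqVneq h 0; first by rewrite /form_deg msize0.
rewrite /form_deg -(dhomog_uniq nzh hh (dhomog_msize hh)).
exact: odd_homog_real_root.
Qed.

End BinaryForms.

Theorem proposition3p6 (R : rcfType) (d : nat)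
  (u1 u2 g h u1' u2' : {mpoly R[2]}) :
  u1 \is d.-homog -> u2 \is d.-homog ->
  binary_form g -> binary_form h -> binary_form u1' -> binary_form u2' ->
  u1 = u1' * g * h -> u2 = u2' * g * h ->
  is_gcd u1 u2 (g * h) ->
  is_gcd u1' u2' 1 ->
  is_gcd (u1' ^+ 2 + u2' ^+ 2) g 1 ->
  (forall z : 'I_2 -> R[i], is_root_C h z -> is_root_C (u1' ^+ 2 + u2' ^+ 2) z) ->
  (forall x : 'I_2 -> R, ~ is_root_R (u1' ^+ 2 + u2' ^+ 2) x) /\
  (forall x : 'I_2 -> R, ~ is_root_R h x) /\
  ~~ odd (form_deg h).
Proof.
move=> _ _ _ bh bu1 bu2 _ _ _ gcd12 _ h_roots.
have no_root_sum x := coprime_forms_sum_sqr_no_real_root x bu1 bu2 gcd12.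
have no_root_h x : ~ is_root_R h x.
  by move=> /is_root_C_real /h_roots /is_root_C_real; apply: no_root_sum.
split=> [//|]; split=> [//|].
by apply/negP => /(binary_form_odd_real_root bh) [x /no_root_h].
Qed.
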